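(* Let $V$ be a finite set of variables and let $(\mathit{base}_0, \mathit{stay}_0, \mathit{step}_0, \mathit{conc}_0)$ and $(\mathit{base}_1, \mathit{stay}_1, \mathit{step}_1, \mathit{conc}_1)$ be generalized acceleration lemmas (GALs) over $V$. Let $\mathit{step} := (\mathit{conc}_0 \land \mathit{step}_0 ) \lor (\mathit{conc}_1 \land \mathit{step}_1 \land \mathit{stay}_0)$. Then the tuple $(\mathit{base}_0 \lor \mathit{base}_1,\ \mathit{stay}_0 \land \mathit{stay}_1,\ \mathit{step},\ \mathit{conc}_0 \lor \mathit{conc}_1)$ is also a GAL over $V$.
   Context: Fix a first-order theory $T$. For a set of variables $X$, $\mathcal{A}(X)$ denotes the set of assignments $\nu: X \to \mathcal{V}$ (values). $X' = \{x' \mid x \in X\}$ is a disjoint primed copy of $X$; for $\nu \in \mathcal{A}(X)$, $\nu' \in \mathcal{A}(X')$ is given by $\nu'(x') = \nu(x)$; for $\nu_1,\nu_2 \in \mathcal{A}(X)$, $\langle \nu_1,\nu_2\rangle := \nu_1 \uplus \nu_2'$. $\nu \models_T \alpha$ denotes entailment in $T$. A generalized acceleration lemma (GAL) over $V$ is a tuple $(\mathit{base}, \mathit{stay}, \mathit{step}, \mathit{conc})$ of first-order formulas with $\mathit{base}, \mathit{conc}$ having free variables in $V$ and $\mathit{stay}, \mathit{step}$ having free variables in $V \cup V'$, such that: (I) for every sequence $\alpha \in \mathcal{A}(V)^\omega$ with $\alpha[0] \models_T \mathit{conc}$, if (a) for all $i$, $\langle\alpha[i],\alpha[i+1]\rangle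 \models_T \mathit{step} \lor \mathit{stay}$, and (b) for all $i$ there is $j \ge i$ with $\langle\alpha[j],\alpha[j+1]\rangle \models_T \mathit{step}$, then there is $k$ with $\alpha[k] \models_T \mathit{base}$; and (II) for all $\nu,\nu' \in \mathcal{A}(V)$ with $\nu \models_T \mathit{conc}$ and $\langle \nu,\nu'\rangle \models_T \mathit{step}\lor\mathit{stay}$, we have $\nu' \models_T \mathit{conc}$. *)

(* A formula with free variables in V is represented by its set of models
   (assignments V -> Val satisfying it modulo T); a formula over V ∪ V' by a
   relation on pairs of assignments <nu1, nu2>. *)
From Stdlib Require Import List Arith.

Definition assignment (V Val : Type) := V -> Val.

Definition fml (V Val : Type) := assignment V Val -> Prop.
Definition fml2 (V Val : Type) := assignment V Val -> assignment V Val -> Prop.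

Definition f_or {V Val} (a b : fml V Val) : fml V Val := fun nu => a nu \/ b nu.
Definition f2_and {V Val} (a b : fml2 V Val) : fml2 V Val :=
  fun n1 n2 => a n1 n2 /\ b n1 n2.
Definition f2_or {V Val} (a b : fml2 V Val) : fml2 V Val :=
  fun n1 n2 => a n1 n2 \/ b n1 n2.
Definition lift {V Val} (a : fml V Val) : fml2 V Val := fun n1 _ => a n1.

Definition finite_type (V : Type) : Prop := exists l : list V, forall x : V, In x l.

Definition GAL {V Val : Type} (base : fml V Val) (stay step : fml2 V Val)
  (conc : fml V Val) : Prop :=
  (forall alpha : nat -> assignment V Val,
      conc (alpha 0) ->
      (forall i, step (alpha i) (alpha (S i)) \/ stay (alpha i) (alpha (S i))) ->
      (forall i, exists j, i <= j /\ step (alpha j) (alpha (S j))) ->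
      exists k, base (alpha k))
  /\
  (forall nu nu' : assignment V Val,
      conc nu -> (step nu nu' \/ stay nu nu') -> conc nu').

(* Split a run of the combined relation according to whether the
   [conc0 /\ step0] transitions occur infinitely often.  If they do, the run
   from the first of them on is a run of the first GAL (every combined
   transition is a [step0] or a [stay0]) starting in [conc0].  If they do not,
   then eventually every combined step is a [conc1 /\ step1] transition and
   every transition is a [step1] or a [stay1], so the suffix starting at a
   late [conc1 /\ step1] transition is a run of the second GAL. *)
From Stdlib Require Import List Arith Lia Classical.

Definition infinitely_often (P : nat -> Prop) : Prop :=
  forall i, exists j, i <= j /\ P j.

Lemma infinitely_often_or_eventually_never (P : nat -> Prop) :
  infinitely_often P \/ exists n, forall j, n <= j -> ~ P j.
Proof.
  destruct (classic (infinitely_often P)) as [HP | HP]; [now left | right].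
  apply not_all_ex_not in HP as [n Hn].
  exists n; intros j Hj HPj.
  apply Hn; now exists j.
Qed.

Lemma infinitely_often_eventually_impl (P Q : nat -> Prop) (n : nat) :
  (forall j, n <= j -> P j -> Q j) ->
  infinitely_often P -> infinitely_often Q.
Proof.
  intros HPQ HP i.
  destruct (HP (max i n)) as [j [Hj HPj]].
  exists j; split; [lia | apply HPQ; [lia | exact HPj]].
Qed.

Lemma GAL_reaches_base_from {V Val : Type} (base : fml V Val)
  (stay step : fml2 V Val) (conc : fml V Val)
  (alpha : nat -> assignment V Val) (m : nat) :
  GAL base stay step conc ->
  conc (alpha m) ->
  (forall i, m <= i ->
     step (alpha i) (alpha (S i)) \/ stay (alpha i) (alpha (S i))) ->
  infinitely_often (fun j => step (alpha j) (alpha (S j))) ->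
  exists k, base (alpha k).
Proof.
  intros [Hreach _] Hconc Htrans Hinf.
  destruct (Hreach (fun i => alpha (m + i))) as [k Hk].
  - now rewrite Nat.add_0_r.
  - intro i; rewrite <- plus_n_Sm; apply Htrans; lia.
  - intro i.
    destruct (Hinf (m + i)) as [j [Hj Hstep]].
    exists (j - m); split; [lia |].
    rewrite <- plus_n_Sm.
    now replace (m + (j - m)) with j by lia.
  - now exists (m + k).
Qed.

Section Combination.

Variables (V Val : Type).
Variables (base0 conc0 base1 conc1 : fml V Val).
Variables (stay0 step0 stay1 step1 : fml2 V Val).

Definition step01 : fml2 V Val :=
  f2_or (f2_and (lift conc0) step0) (f2_and (f2_and (lift conc1) step1) stay0).

Definition stay01 : fml2 V Val := f2_and stay0 stay1.

Definition trans01 (nu nu' : assignment V Val) : Prop :=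
  step01 nu nu' \/ stay01 nu nu'.

Lemma trans01_step0_or_stay0 nu nu' :
  trans01 nu nu' -> step0 nu nu' \/ stay0 nu nu'.
Proof. unfold trans01, step01, stay01, f2_or, f2_and, lift; tauto. Qed.

Lemma step01_step1 nu nu' :
  step01 nu nu' -> ~ (conc0 nu /\ step0 nu nu') -> conc1 nu /\ step1 nu nu'.
Proof. unfold step01, f2_or, f2_and, lift; tauto. Qed.

Lemma trans01_step1_or_stay1 nu nu' :
  trans01 nu nu' -> ~ (conc0 nu /\ step0 nu nu') ->
  step1 nu nu' \/ stay1 nu nu'.
Proof. unfold trans01, step01, stay01, f2_or, f2_and, lift; tauto. Qed.

Hypothesis GAL0 : GAL base0 stay0 step0 conc0.
Hypothesis GAL1 : GAL base1 stay1 step1 conc1.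

Lemma trans01_conc_closed nu nu' :
  f_or conc0 conc1 nu -> trans01 nu nu' -> f_or conc0 conc1 nu'.
Proof.
  destruct GAL0 as [_ Hclosed0], GAL1 as [_ Hclosed1].
  intros Hconc Htrans.
  destruct (classic (conc0 nu /\ step0 nu nu')) as [[Hc0 Hs0] | Hno0].
  - left; apply (Hclosed0 nu); auto.
  - destruct Hconc as [Hc0 | Hc1].
    + left; apply (Hclosed0 nu); auto using trans01_step0_or_stay0.
    + right; apply (Hclosed1 nu); auto using trans01_step1_or_stay1.
Qed.

Lemma trans01_run_reaches_base (alpha : nat -> assignment V Val) :
  (forall i, trans01 (alpha i) (alpha (S i))) ->
  infinitely_often (fun j => step01 (alpha j) (alpha (S j))) ->
  exists k, f_or base0 base1 (alpha k).
Proof.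
  intros Htrans Hinf.
  destruct (infinitely_often_or_eventually_never
              (fun j => conc0 (alpha j) /\ step0 (alpha j) (alpha (S j))))
    as [Hinf0 | [n Hnever0]].
  - destruct (Hinf0 0) as [j0 [_ [Hc0 _]]].
    destruct (GAL_reaches_base_from _ _ _ _ alpha j0 GAL0 Hc0) as [k Hk].
    + intros i _; now apply trans01_step0_or_stay0.
    + revert Hinf0; apply infinitely_often_eventually_impl with (n := 0); tauto.
    + now exists k; left.
  - assert (Hinf1 : infinitely_often
                      (fun j => conc1 (alpha j) /\ step1 (alpha j) (alpha (S j)))).
    { revert Hinf; apply infinitely_often_eventually_impl with (n := n).
      intros j Hj Hs; apply step01_step1; auto. }
    destruct (Hinf1 n) as [j1 [Hj1 [Hc1 _]]].
    destruct (GAL_reaches_base_from _ _ _ _ alpha j1 GAL1 Hc1) as [k Hk].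
    + intros i Hi; apply trans01_step1_or_stay1; [apply Htrans |].
      apply Hnever0; lia.
    + revert Hinf1; apply infinitely_often_eventually_impl with (n := 0); tauto.
    + now exists k; right.
Qed.

End Combination.

Theorem lemma2 (V Val : Type) (HV : finite_type V)
  (base0 conc0 base1 conc1 : fml V Val)
  (stay0 step0 stay1 step1 : fml2 V Val) :
  GAL base0 stay0 step0 conc0 ->
  GAL base1 stay1 step1 conc1 ->
  GAL (f_or base0 base1) (f2_and stay0 stay1)
      (f2_or (f2_and (lift conc0) step0)
             (f2_and (f2_and (lift conc1) step1) stay0))
      (f_or conc0 conc1).
Proof.
  intros GAL0 GAL1; split.
  - intros alpha _ Htrans Hinf.
    exact (trans01_run_reaches_base _ _ _ _ _ _ _ _ _ _ GAL0 GAL1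
             alpha Htrans Hinf).
  - exact (trans01_conc_closed _ _ _ _ _ _ _ _ _ _ GAL0 GAL1).
Qed.
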